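(* (1) If $p$ is a prime with $p\equiv1\pmod6$, then $P_p(3)$ divides $p-1$. (2) If $p$ is a prime with $p\equiv5\pmod6$, then $P_p(3)$ divides $3(p-1)$.
   Context: The Ducci function $D:\mathbb{Z}_p^3\to\mathbb{Z}_p^3$ is $D(x_1,x_2,x_3)=(x_1+x_2,\,x_2+x_3,\,x_3+x_1)$, entries mod $p$. The period $\mathrm{Per}(\mathbf{u})$ is the smallest $k\ge1$ such that $D^{l+k}(\mathbf{u})=D^l(\mathbf{u})$ for some $l\ge0$, and $P_p(3)=\mathrm{Per}(0,0,1)$. *)

From mathcomp Require Import all_boot.
Set Implicit Arguments. Unset Strict Implicit. Unset Printing Implicit Defensive.

(* Ducci map on Z_p^3, with residues represented as nats reduced mod p. *)
Definition ducci (p : nat) (u : nat * nat * nat) : nat * nat * nat :=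
  let: (x1, x2, x3) := u in
  ((x1 + x2) %% p, (x2 + x3) %% p, (x3 + x1) %% p).

Definition eventual_period (p : nat) (u : nat * nat * nat) (k : nat) : Prop :=
  0 < k /\ exists l, iter (l + k) (ducci p) u = iter l (ducci p) u.

Definition is_Per (p : nat) (u : nat * nat * nat) (k : nat) : Prop :=
  eventual_period p u k /\ forall k', eventual_period p u k' -> k <= k'.

Definition is_P3 (p k : nat) : Prop := is_Per p (0, 0, 1) k.

From mathcomp Require Import all_boot.
From mathcomp Require Import cyclic zify.

Set Implicit Arguments.
Unset Strict Implicit.
Unset Printing Implicit Defensive.

(* Over the integers six Ducci steps add 21 (x + y + z) to every coordinate, so
   D^(6m)(0,0,1) = (c, c, c + 1) with 3c + 1 = 2^(6m).  When 2^(6m) = 1 mod p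
   and p <> 3 this forces p | c, i.e. D^(6m)(0,0,1) = (0,0,1) in Z_p^3, and the
   period divides 6m.  By Fermat, 6m can be taken to be p - 1 when p = 1 mod 6
   and 3(p - 1) when p = 5 mod 6. *)

Section IterCycle.

Variables (T : Type) (f : T -> T) (u : T) (N : nat).
Hypotheses (N_gt0 : 0 < N) (iterNu : iter N f u = u).

Lemma iter_mul_cycle q : iter (q * N) f u = u.
Proof. by rewrite iterM iter_fix. Qed.

Lemma iter_cycle_shift l k : iter (l + k) f u = iter l f u -> iter k f u = u.
Proof.
move=> ulk; have le_l_lN : l <= l * N by rewrite leq_pmulr.
have := congr1 (iter (l * N - l) f) ulk.
by rewrite -!iterD addnA subnK // iter_mul_cycle addnC iterD iter_mul_cycle.
Qed.

Lemma iter_modn_cycle k : iter k f u = u -> iter (N %% k) f u = u.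
Proof.
move=> iterku; have := iterNu.
by rewrite {1}(divn_eq N k) addnC iterD iterM (iter_fix _ iterku).
Qed.

End IterCycle.

Lemma is_Per_dvd p u N : 0 < N -> iter N (ducci p) u = u ->
  exists k, is_Per p u k /\ k %| N.
Proof.
move=> N_gt0 iterNu.
pose returns k := (0 < k) && (iter k (ducci p) u == u).
have returns_N : returns N by rewrite /returns N_gt0 iterNu eqxx.
have [k /andP[k_gt0 /eqP iterku] k_min] := ex_minnP (ex_intro _ N returns_N).
exists k; split; [split|].
- by split=> //; exists 0.
- move=> k' [k'_gt0 [l ulk']]; apply: k_min.
  by rewrite /returns k'_gt0 (iter_cycle_shift N_gt0 iterNu ulk') eqxx.
- have [/eqP // | Nk_gt0] := posnP (N %% k).
  have : returns (N %% k) by rewrite /returns Nk_gt0 iter_modn_cycle ?eqxx.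
  by move/k_min; rewrite leqNgt ltn_pmod.
Qed.

Definition ducci_nat (u : nat * nat * nat) : nat * nat * nat :=
  let: (x1, x2, x3) := u in (x1 + x2, x2 + x3, x3 + x1).

Definition tmodn (u : nat * nat * nat) (p : nat) : nat * nat * nat :=
  let: (x1, x2, x3) := u in (x1 %% p, x2 %% p, x3 %% p).

Lemma iter_ducci_tmodn p n u :
  iter n (ducci p) (tmodn u p) = tmodn (iter n ducci_nat u) p.
Proof.
elim: n => //= n ->; case: (iter n ducci_nat u) => [[x1 x2] x3] /=.
by rewrite !modnDm.
Qed.

Lemma iter6_ducci_nat x y z : iter 6 ducci_nat (x, y, z) =
  (x + 21 * (x + y + z), y + 21 * (x + y + z), z + 21 * (x + y + z)).
Proof. by rewrite /=; congr (_, _, _); lia. Qed.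

Lemma iter6m_ducci_nat_001 m :
  exists c, iter (6 * m) ducci_nat (0, 0, 1) = (c, c, c.+1) /\
            3 * c + 1 = 2 ^ (6 * m).
Proof.
elim: m => [|m [c [iter_c c_pow]]]; first by exists 0.
exists (64 * c + 21); split.
  by rewrite mulnSr addnC iterD iter_c iter6_ducci_nat; congr (_, _, _); lia.
by rewrite mulnSr expnD -c_pow; lia.
Qed.

Lemma iter6m_ducci_001 p m : prime p -> p != 3 -> 2 ^ (6 * m) = 1 %[mod p] ->
  iter (6 * m) (ducci p) (0, 0, 1) = (0, 0, 1).
Proof.
move=> p_pr p_neq3 pow_1; have p_gt1 := prime_gt1 p_pr.
have [c [iter_c c_pow]] := iter6m_ducci_nat_001 m.
have p_dvd_c : p %| c.
  have : 3 * c + 1 = 0 + 1 %[mod p] by rewrite c_pow pow_1.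
  move/eqP; rewrite eqn_modDr mod0n -/(dvdn p _).
  by rewrite Gauss_dvdr // prime_coprime // dvdn_prime2 // eq_sym.
have tmodn_001 : tmodn (0, 0, 1) p = (0, 0, 1) by rewrite /= mod0n modn_small.
rewrite -[in LHS]tmodn_001 iter_ducci_tmodn iter_c /=.
by rewrite -addn1 -modnDml (eqP p_dvd_c) modn_small.
Qed.

Lemma is_P3_dvd p N : prime p -> p != 3 -> 0 < N -> 6 %| N ->
  2 ^ N = 1 %[mod p] -> exists k, is_P3 p k /\ k %| N.
Proof.
move=> p_pr p_neq3 N_gt0 /dvdnP[m N_eq].
rewrite {}N_eq mulnC in N_gt0 * => pow_1.
by apply: is_Per_dvd => //; apply: iter6m_ducci_001.
Qed.

Lemma fermat_two p : prime p -> odd p -> 2 ^ p.-1 = 1 %[mod p].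
Proof.
by move=> p_pr p_odd; rewrite -totient_prime // Euler_exp_totient ?coprime2n.
Qed.

Theorem theorem4p4 (p : nat) (hp : prime p) :
  (p %% 6 = 1 -> exists k, is_P3 p k /\ k %| p.-1) /\
  (p %% 6 = 5 -> exists k, is_P3 p k /\ k %| 3 * p.-1).
Proof.
have p_odd_neq3 r : p %% 6 = r -> odd r -> r != 3 -> odd p /\ p != 3.
  move=> p_mod r_odd r_neq3; split.
    by rewrite (divn_eq p 6) p_mod oddD oddM andbF.
  by apply: contra_neq r_neq3 => p3; rewrite -p_mod p3.
have p_gt1 := prime_gt1 hp.
split=> p_mod; have [p_odd p_neq3] := p_odd_neq3 _ p_mod erefl erefl.
- apply: is_P3_dvd => //; [lia | lia | exact: fermat_two].
- apply: is_P3_dvd => //; [lia | lia |].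
  by rewrite mulnC expnM -modnXm fermat_two // modnXm exp1n.
Qed.
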